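(* Let $n$ be a positive integer, and let $g_0,h_0:\mathbb{R}\to\mathbb{R}$ be $g_0(x)=nx$, $h_0(x)=x+1$ (these generate the standard affine action of $\mathrm{BS}(1,n)$, satisfying $g_0h_0g_0^{-1}=h_0^n$). There exist neighborhoods $U$ of $g_0$ and $V$ of $h_0$ in the uniform $C^1$ topology on $C^1$ diffeomorphisms of $\mathbb{R}$ such that whenever $g\in U$, $h\in V$ and the correspondence $g_0\mapsto g$, $h_0\mapsto h$ extends to an isomorphism from the group generated by $g_0,h_0$ onto the group generated by $g,h$, the action of $\langle g,h\rangle$ on $\mathbb{R}$ is topologically conjugate to that of $\langle g_0,h_0\rangle$; i.e. there is a homeomorphism $\phi$ of $\mathbb{R}$ with $\phi g=g_0\phi$ and $\phi h=h_0\phi$.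
   Context: The uniform $C^1$ topology is the one given by the distance $\sup_{x\in\mathbb{R}}\big(|f(x)-k(x)|+|f'(x)-k'(x)|\big)$ between maps $f,k$. *)

From Stdlib Require Import Reals.
Open Scope R_scope.

Definition C1 (f : R -> R) : Prop :=
  exists f' : R -> R, (forall x, derivable_pt_lim f x (f' x)) /\ continuity f'.

Definition C1_diffeo (f : R -> R) : Prop :=
  C1 f /\ exists finv : R -> R,
    (forall x, finv (f x) = x) /\ (forall y, f (finv y) = y) /\ C1 finv.

Definition homeo (f : R -> R) : Prop :=
  continuity f /\ exists finv : R -> R,
    (forall x, finv (f x) = x) /\ (forall y, f (finv y) = y) /\ continuity finv.

Inductive gen (a b : R -> R) : (R -> R) -> Prop :=
| gen_id : gen a b (fun x => x)
| gen_a : gen a b a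
| gen_b : gen a b b
| gen_comp : forall f k, gen a b f -> gen a b k -> gen a b (fun x => f (k x))
| gen_inv : forall f k, gen a b f ->
    (forall x, f (k x) = x) -> (forall x, k (f x) = x) -> gen a b k.

Definition extends_to_iso (a0 b0 a b : R -> R) : Prop :=
  exists Phi : (R -> R) -> (R -> R),
    Phi a0 = a /\ Phi b0 = b /\
    (forall f, gen a0 b0 f -> gen a b (Phi f)) /\
    (forall f k, gen a0 b0 f -> gen a0 b0 k ->
       Phi (fun x => f (k x)) = (fun x => Phi f (Phi k x))) /\
    (forall f k, gen a0 b0 f -> gen a0 b0 k -> Phi f = Phi k -> f = k) /\
    (forall f', gen a b f' -> exists f, gen a0 b0 f /\ Phi f = f').

(* For g, h within 1/2 of g0, h0 in the C^1 distance, h is increasing and moves every point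
   by between 1/2 and 3/2, g expands distances by the factor n - 1/2, and the isomorphism
   transports the relation g0 h0 = h0^n g0 to g h = h^n g.

   If n = 1 the isomorphism forces g = id, and h is conjugated to x + 1 by mapping the
   fundamental domain [0, h 0) linearly onto [0, 1) and extending h-equivariantly.

   If n >= 2, let N(y) be the index j of the orbit interval [h^j 0, h^(j+1) 0) containing y.
   The relation gives N(g y) = n N(y) + O(1), so phi(x) = lim N(g^k x) / n^k exists, is
   monotone, and satisfies phi h = phi + 1 and phi g = n phi. Since g expands distances by a
   factor > 1 while h moves points by a bounded amount, phi is injective, and its image
   contains the dense set phi(0) + Z[1/n]. A strictly increasing map of R with dense image
   is a homeomorphism. *)

From Stdlib Require Import Reals Lra Lia ZArith ClassicalEpsilon FunctionalExtensionality.
Open Scope R_scope.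

Lemma C1_close_bounds (f f' p : R -> R) (c eps : R) :
  (forall x, derivable_pt_lim f x (f' x)) ->
  (forall x, Rabs (f x - p x) + Rabs (f' x - c) < eps) ->
  (forall x, p x - eps < f x < p x + eps) /\
  (forall x y, x < y -> (c - eps) * (y - x) <= f y - f x).
Proof.
  intros Df Hclose. split.
  - intros x. specialize (Hclose x). pose proof (Rabs_pos (f' x - c)).
    assert (Hv : Rabs (f x - p x) < eps) by lra. apply Rabs_def2 in Hv. lra.
  - intros x y Hxy. destruct (MVT_cor2 f f' x y Hxy (fun z _ => Df z)) as [z [-> _]].
    apply Rmult_le_compat_r; [lra |].
    specialize (Hclose z). pose proof (Rabs_pos (f z - p z)).
    assert (Hd : Rabs (f' z - c) < eps) by lra. apply Rabs_def2 in Hd. lra.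
Qed.

Lemma Un_cv_const (c : R) : Un_cv (fun _ => c) c.
Proof. intros eps Heps. exists 0%nat. intros k _. rewrite R_dist_eq. exact Heps. Qed.

Lemma pow_half_lt (K eps : R) : 0 < eps -> exists k : nat, K * (/2) ^ k < eps.
Proof.
  intros Heps. pose proof (Rabs_pos K). pose proof (Rle_abs K).
  destruct (pow_lt_1_zero (/2) ltac:(rewrite Rabs_pos_eq; lra) (eps / (Rabs K + 1)))
    as [k Hk].
  { apply Rdiv_lt_0_compat; lra. }
  exists k. specialize (Hk k (le_n k)).
  assert (Hq : 0 <= (/2) ^ k) by (apply pow_le; lra).
  rewrite Rabs_pos_eq in Hk by exact Hq.
  assert (Hlt : (/2) ^ k * (Rabs K + 1) < eps).
  { apply (Rmult_lt_compat_r (Rabs K + 1)) in Hk; [| lra].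
    unfold Rdiv in Hk. rewrite Rmult_assoc, Rinv_l in Hk; lra. }
  nra.
Qed.

Lemma Cauchy_crit_geometric (u : nat -> R) (C : R) :
  0 <= C -> (forall j, Rabs (u (S j) - u j) <= C * (/2) ^ S j) -> Cauchy_crit u.
Proof.
  intros HC Hstep.
  assert (Htail : forall k d, Rabs (u (d + k)%nat - u k) <= C * (/2) ^ k - C * (/2) ^ (d + k)).
  { intros k d. induction d as [|d IH]; simpl Nat.add.
    - rewrite Rminus_diag, Rabs_R0. lra.
    - specialize (Hstep (d + k)%nat). simpl pow in *.
      pose proof (Rabs_triang (u (S (d + k)) - u (d + k)%nat) (u (d + k)%nat - u k)).
      replace (u (S (d + k)) - u (d + k)%nat + (u (d + k)%nat - u k))
        with (u (S (d + k)) - u k) in H by ring.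
      lra. }
  assert (Hbound : forall k m, (k <= m)%nat -> Rabs (u m - u k) <= C * (/2) ^ k).
  { intros k m Hkm. replace m with (m - k + k)%nat by lia.
    pose proof (Htail k (m - k)%nat).
    assert (0 <= C * (/2) ^ (m - k + k)) by (apply Rmult_le_pos; [| apply pow_le]; lra).
    lra. }
  intros eps Heps. destruct (pow_half_lt (2 * C) eps Heps) as [N HN].
  exists N. intros p q Hp Hq. unfold R_dist.
  pose proof (Hbound N p Hp). pose proof (Hbound N q Hq).
  pose proof (Rabs_triang (u p - u N) (u N - u q)).
  rewrite (Rabs_minus_sym (u N)) in H1.
  replace (u p - u N + (u N - u q)) with (u p - u q) in H1 by ring.
  lra.
Qed.

Lemma continuity_of_increasing_dense (f : R -> R) :
  (forall x y, x < y -> f x < f y) ->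
  (forall u v, u < v -> exists x, u < f x < v) ->
  continuity f.
Proof.
  intros Hinc Hdense x eps Heps. simpl in *.
  assert (Hrefl : forall x y, f x < f y -> x < y).
  { intros x1 y1 H. destruct (Rlt_le_dec x1 y1) as [|[Hlt|<-]]; auto.
    - apply Hinc in Hlt. lra.
    - lra. }
  destruct (Hdense (f x - eps) (f x)) as [a [Ha1 Ha2]]; [lra |].
  destruct (Hdense (f x) (f x + eps)) as [b [Hb1 Hb2]]; [lra |].
  apply Hrefl in Ha2. apply Hrefl in Hb1.
  exists (Rmin (x - a) (b - x)). split; [apply Rmin_glb_lt; lra |].
  intros y [_ Hy]. unfold R_dist in *. apply Rabs_def2 in Hy.
  pose proof (Rmin_l (x - a) (b - x)). pose proof (Rmin_r (x - a) (b - x)).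
  assert (f a < f y) by (apply Hinc; lra). assert (f y < f b) by (apply Hinc; lra).
  apply Rabs_def1; lra.
Qed.

Lemma homeo_of_increasing_dense (f : R -> R) :
  (forall x y, x < y -> f x < f y) ->
  (forall u v, u < v -> exists x, u < f x < v) ->
  homeo f.
Proof.
  intros Hinc Hdense.
  assert (Hrefl : forall x y, f x < f y -> x < y).
  { intros x y H. destruct (Rlt_le_dec x y) as [|[Hlt|<-]]; auto.
    - apply Hinc in Hlt. lra.
    - lra. }
  pose proof (continuity_of_increasing_dense f Hinc Hdense) as Hcont.
  assert (Hsurj : forall y, exists x, f x = y).
  { intros y.
    destruct (Hdense (y - 1) y) as [x1 H1]; [lra |].
    destruct (Hdense y (y + 1)) as [x2 H2]; [lra |].
    destruct (IVT (fun x => f x - y) x1 x2) as [z [_ Hz]].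
    - apply continuity_minus; [exact Hcont | apply continuity_const; intros ? ?; reflexivity].
    - apply Hrefl; lra.
    - lra.
    - lra.
    - exists z. lra. }
  destruct (choice (fun y x => f x = y) Hsurj) as [finv Hfinv].
  assert (finv_f : forall x, finv (f x) = x).
  { intros x. pose proof (Hfinv (f x)) as E.
    destruct (Rlt_le_dec (finv (f x)) x) as [Hlt|[Hlt|Heq]]; auto;
      apply Hinc in Hlt; lra. }
  split; [exact Hcont |]. exists finv. split; [exact finv_f | split; [exact Hfinv |]].
  apply continuity_of_increasing_dense.
  - intros x y Hxy. apply Hrefl. rewrite !Hfinv. exact Hxy.
  - intros u v Huv. exists (f ((u + v) / 2)). rewrite finv_f. lra.
Qed.

Lemma Rdiv_unit_interval (a b : R) : 0 <= a < b -> 0 <= a / b < 1.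
Proof.
  intros [Ha Hab]. assert (Hb : 0 < / b) by (apply Rinv_0_lt_compat; lra).
  split; [unfold Rdiv; nra |].
  replace 1 with (b / b) by (field; lra). unfold Rdiv. nra.
Qed.

Lemma exists_Z_between (p M u v : R) :
  0 < M -> 1 < M * (v - u) -> exists j : Z, u < (p + IZR j) / M < v.
Proof.
  intros HM Huv. destruct (archimed (u * M - p)) as [Hgt Hle].
  exists (up (u * M - p)). set (q := (p + IZR (up (u * M - p))) / M).
  assert (Eq : p + IZR (up (u * M - p)) = q * M) by (unfold q; field; lra).
  split; nra.
Qed.

Lemma gen_injective (a b : R -> R) :
  (forall x y, a x = a y -> x = y) -> (forall x y, b x = b y -> x = y) ->
  forall f, gen a b f -> forall x y, f x = f y -> x = y.
Proof.
  intros a_inj b_inj f Hf. induction Hf as [| | |f k _ IHf _ IHk|f k _ _ Hfk _]; intros x y E.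
  - exact E.
  - exact (a_inj x y E).
  - exact (b_inj x y E).
  - exact (IHk x y (IHf _ _ E)).
  - rewrite <- (Hfk x), <- (Hfk y), E. reflexivity.
Qed.

Lemma extends_to_iso_id (a0 b0 a b : R -> R) :
  extends_to_iso a0 b0 a b ->
  (forall x y, a x = a y -> x = y) -> (forall x y, b x = b y -> x = y) ->
  a0 = (fun x => x) -> a = (fun x => x).
Proof.
  intros [Phi [Phi_a [_ [Phi_gen [Phi_comp _]]]]] a_inj b_inj a0_id.
  (* Phi id is an idempotent injective map, hence the identity. *)
  pose proof (Phi_comp _ _ (gen_id a0 b0) (gen_id a0 b0)) as Phi_idem. cbv beta in Phi_idem.
  apply functional_extensionality. intros x. rewrite <- Phi_a, a0_id.
  apply (gen_injective a b a_inj b_inj _ (Phi_gen _ (gen_id a0 b0))).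
  exact (eq_sym (equal_f Phi_idem x)).
Qed.

Lemma extends_to_iso_relation (a0 b0 a b : R -> R) (m : nat) :
  extends_to_iso a0 b0 a b ->
  (forall x, a0 (b0 x) = Nat.iter (S m) b0 (a0 x)) ->
  forall x, a (b x) = Nat.iter (S m) b (a x).
Proof.
  intros [Phi [Phi_a [Phi_b [_ [Phi_comp _]]]]] Hrel.
  assert (Phi_iter : forall k, gen a0 b0 (Nat.iter (S k) b0) /\
            Phi (Nat.iter (S k) b0) = Nat.iter (S k) b).
  { induction k as [|k [Hgen Hk]]; [exact (conj (gen_b a0 b0) Phi_b) |].
    change (Nat.iter (S (S k)) b0) with (fun x => b0 (Nat.iter (S k) b0 x)).
    split; [apply gen_comp; [apply gen_b | exact Hgen] |].
    rewrite Phi_comp, Hk, Phi_b by (apply gen_b || exact Hgen). reflexivity. }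
  destruct (Phi_iter m) as [Hgen Hm].
  assert (E : (fun x => a0 (b0 x)) = (fun x => Nat.iter (S m) b0 (a0 x)))
    by (apply functional_extensionality; exact Hrel).
  apply (f_equal Phi) in E.
  rewrite (Phi_comp a0 b0), (Phi_comp (Nat.iter (S m) b0) a0), Hm, Phi_a, Phi_b in E
    by (apply gen_a || apply gen_b || exact Hgen).
  intros x. exact (equal_f E x).
Qed.

Lemma iter_translate (k : nat) (y : R) : Nat.iter k (fun x => x + 1) y = y + INR k.
Proof.
  induction k as [|k IH]; simpl Nat.iter; [simpl; ring |].
  rewrite IH, S_INR. ring.
Qed.

Section Orbits.

Variables (h hinv : R -> R) (delta : R).
Hypothesis hinv_h : forall x, hinv (h x) = x.
Hypothesis h_hinv : forall y, h (hinv y) = y.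
Hypothesis h_increasing : forall x y, x < y -> h x < h y.
Hypothesis delta_pos : 0 < delta.
Hypothesis h_displacement : forall x, x + delta < h x.

Lemma hinv_increasing x y : x < y -> hinv x < hinv y.
Proof.
  intros Hxy. destruct (Rlt_le_dec (hinv x) (hinv y)) as [|[Hlt|Heq]]; auto.
  - apply h_increasing in Hlt. rewrite !h_hinv in Hlt. lra.
  - apply (f_equal h) in Heq. rewrite !h_hinv in Heq. lra.
Qed.

Definition hpow (j : Z) (x : R) : R :=
  if Z.leb 0 j then Nat.iter (Z.to_nat j) h x else Nat.iter (Z.to_nat (- j)) hinv x.

Lemma hpow_1 x : hpow 1 x = h x.
Proof. reflexivity. Qed.

Lemma hpow_of_nat (m : nat) x : hpow (Z.of_nat m) x = Nat.iter m h x.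
Proof.
  unfold hpow. destruct (Z.leb_spec 0 (Z.of_nat m)); [| lia].
  rewrite Nat2Z.id. reflexivity.
Qed.

Lemma hpow_succ j x : hpow (j + 1) x = h (hpow j x).
Proof.
  unfold hpow. destruct (Z.leb_spec 0 j), (Z.leb_spec 0 (j + 1)); try lia.
  - replace (Z.to_nat (j + 1)) with (S (Z.to_nat j)) by lia. reflexivity.
  - replace (Z.to_nat (j + 1)) with 0%nat by lia.
    replace (Z.to_nat (- j)) with 1%nat by lia. simpl. rewrite h_hinv. reflexivity.
  - replace (Z.to_nat (- j)) with (S (Z.to_nat (- (j + 1)))) by lia. simpl.
    rewrite h_hinv. reflexivity.
Qed.

Lemma hpow_pred j x : hpow (j - 1) x = hinv (hpow j x).
Proof.
  rewrite <- (hinv_h (hpow (j - 1) x)), <- hpow_succ, Z.sub_add. reflexivity.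
Qed.

Lemma hpow_add i j x : hpow (i + j) x = hpow i (hpow j x).
Proof.
  induction i as [|i IH|i IH] using Z.peano_ind; [reflexivity | |].
  - rewrite <- Z.add_1_r. replace (i + 1 + j)%Z with (i + j + 1)%Z by ring.
    rewrite !hpow_succ, IH. reflexivity.
  - rewrite <- Z.sub_1_r. replace (i - 1 + j)%Z with (i + j - 1)%Z by ring.
    rewrite !hpow_pred, IH. reflexivity.
Qed.

Lemma hpow_increasing j x y : x < y -> hpow j x < hpow j y.
Proof.
  intros Hxy. induction j as [|j IH|j IH] using Z.peano_ind.
  - exact Hxy.
  - rewrite <- Z.add_1_r, !hpow_succ. apply h_increasing, IH.
  - rewrite <- Z.sub_1_r, !hpow_pred. apply hinv_increasing, IH.
Qed.

Lemma hpow_le j x y : x <= y -> hpow j x <= hpow j y.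
Proof. intros [Hlt|<-]; [left; apply hpow_increasing, Hlt | right; reflexivity]. Qed.

Definition horbit (j : Z) : R := hpow j 0.

Lemma horbit_add i j : horbit (i + j) = hpow j (horbit i).
Proof. unfold horbit. rewrite Z.add_comm. apply hpow_add. Qed.

Lemma horbit_add_nat i (d : nat) : horbit i + INR d * delta <= horbit (i + Z.of_nat d).
Proof.
  induction d as [|d IH].
  - rewrite Z.add_0_r. simpl. lra.
  - rewrite Nat2Z.inj_succ, <- Z.add_1_r, Z.add_assoc, horbit_add, hpow_1, S_INR.
    pose proof (h_displacement (horbit (i + Z.of_nat d))). lra.
Qed.

Lemma horbit_increasing i j : (i < j)%Z -> horbit i < horbit j.
Proof.
  intros Hij. pose proof (horbit_add_nat i (Z.to_nat (j - i))) as H.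
  rewrite Z2Nat.id, Zplus_minus in H by lia.
  assert (1 <= INR (Z.to_nat (j - i))) by (apply (le_INR 1); lia).
  nra.
Qed.

Lemma horbit_le i j : (i <= j)%Z -> horbit i <= horbit j.
Proof.
  intros Hij. destruct (Z.eq_dec i j) as [<-|Hne]; [right; reflexivity |].
  left. apply horbit_increasing. lia.
Qed.

Lemma horbit_bracket_search (d : nat) (i : Z) (y : R) :
  horbit i <= y -> y < horbit (i + Z.of_nat d) ->
  exists j, horbit j <= y < horbit (j + 1).
Proof.
  revert i. induction d as [|d IH]; intros i Hlo Hhi.
  - rewrite Z.add_0_r in Hhi. lra.
  - destruct (Rlt_le_dec y (horbit (i + 1))) as [Hy|Hy]; [exists i; lra |].
    apply (IH (i + 1)%Z Hy).
    replace (i + 1 + Z.of_nat d)%Z with (i + Z.of_nat (S d))%Z by lia. exact Hhi.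
Qed.

Lemma horbit_bracket y : exists j, horbit j <= y < horbit (j + 1).
Proof.
  destruct (INR_archimed delta (Rabs y) delta_pos) as [d Hd].
  pose proof (Rle_abs y). pose proof (Rle_abs (- y)). rewrite Rabs_Ropp in *.
  pose proof (horbit_add_nat (- Z.of_nat d) d) as Hlo.
  pose proof (horbit_add_nat 0 d) as Hhi.
  rewrite Z.add_opp_diag_l in Hlo. change (horbit 0) with 0 in Hlo, Hhi.
  apply (horbit_bracket_search (d + d) (- Z.of_nat d)); [lra |].
  replace (- Z.of_nat d + Z.of_nat (d + d))%Z with (0 + Z.of_nat d)%Z by lia. lra.
Qed.

Definition hindex (y : R) : Z :=
  proj1_sig (constructive_indefinite_description _ (horbit_bracket y)).

Lemma hindex_spec y : horbit (hindex y) <= y < horbit (hindex y + 1).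
Proof. unfold hindex. destruct (constructive_indefinite_description _ _) as [j Hj]. exact Hj. Qed.

Lemma hindex_unique y j : horbit j <= y < horbit (j + 1) -> hindex y = j.
Proof.
  intros Hj. destruct (hindex_spec y).
  destruct (Z.lt_trichotomy (hindex y) j) as [Hlt|[Heq|Hgt]]; [| exact Heq |].
  - pose proof (horbit_le (hindex y + 1) j ltac:(lia)). lra.
  - pose proof (horbit_le (j + 1) (hindex y) ltac:(lia)). lra.
Qed.

Lemma hindex_le x y : x <= y -> (hindex x <= hindex y)%Z.
Proof.
  intros Hxy. destruct (Z_le_gt_dec (hindex x) (hindex y)) as [|Hgt]; [assumption |].
  destruct (hindex_spec x), (hindex_spec y).
  pose proof (horbit_le (hindex y + 1) (hindex x) ltac:(lia)). lra.
Qed.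

Lemma hindex_hpow j y : hindex (hpow j y) = (hindex y + j)%Z.
Proof.
  apply hindex_unique. destruct (hindex_spec y) as [Hlo Hhi].
  replace (hindex y + j + 1)%Z with (hindex y + 1 + j)%Z by ring.
  rewrite (horbit_add (hindex y)), (horbit_add (hindex y + 1)).
  split; [apply hpow_le | apply hpow_increasing]; assumption.
Qed.

Definition hcoord (x : R) : R := IZR (hindex x) + hpow (- hindex x) x / h 0.

Lemma hpow_hindex_bounds x : 0 <= hpow (- hindex x) x < h 0.
Proof.
  destruct (hindex_spec x) as [Hlo Hhi].
  apply (hpow_le (- hindex x)) in Hlo. apply (hpow_increasing (- hindex x)) in Hhi.
  rewrite <- horbit_add, Z.add_opp_diag_r in Hlo.
  rewrite <- horbit_add in Hhi.
  replace (hindex x + 1 + - hindex x)%Z with 1%Z in Hhi by ring.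
  split; assumption.
Qed.

Lemma hcoord_hpow j x : hcoord (hpow j x) = hcoord x + IZR j.
Proof.
  unfold hcoord. rewrite hindex_hpow, <- hpow_add, plus_IZR.
  replace (- (hindex x + j) + j)%Z with (- hindex x)%Z by ring. ring.
Qed.

Lemma hcoord_increasing x y : x < y -> hcoord x < hcoord y.
Proof.
  intros Hxy. unfold hcoord.
  destruct (Z.eq_dec (hindex x) (hindex y)) as [E|Hne].
  - rewrite E. apply Rplus_lt_compat_l, Rmult_lt_compat_r.
    + apply Rinv_0_lt_compat. pose proof (h_displacement 0). lra.
    + apply hpow_increasing, Hxy.
  - assert (Hlt : (hindex x + 1 <= hindex y)%Z) by (pose proof (hindex_le x y (Rlt_le _ _ Hxy)); lia).
    apply IZR_le in Hlt. rewrite plus_IZR in Hlt.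
    pose proof (Rdiv_unit_interval _ _ (hpow_hindex_bounds x)).
    pose proof (Rdiv_unit_interval _ _ (hpow_hindex_bounds y)).
    lra.
Qed.

Lemma hcoord_surjective y : exists x, hcoord x = y.
Proof.
  destruct (archimed y) as [Hgt Hle]. set (j := (up y - 1)%Z).
  assert (Hj : IZR j = IZR (up y) - 1) by (unfold j; rewrite minus_IZR; reflexivity).
  pose proof (h_displacement 0) as Hh0.
  set (t := y - IZR j).
  assert (Ht : 0 <= t < 1) by (unfold t; lra).
  assert (Hbase : hindex (t * h 0) = 0%Z).
  { apply hindex_unique. change (0 <= t * h 0 < h 0). split; nra. }
  exists (hpow j (t * h 0)). rewrite hcoord_hpow. unfold hcoord.
  rewrite Hbase. simpl. change (hpow 0 (t * h 0)) with (t * h 0).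
  unfold t. field. lra.
Qed.

Lemma exists_translation_conjugacy :
  exists phi, homeo phi /\ forall x, phi (h x) = phi x + 1.
Proof.
  exists hcoord. split.
  - apply homeo_of_increasing_dense; [exact hcoord_increasing |].
    intros u v Huv. destruct (hcoord_surjective ((u + v) / 2)) as [x Hx].
    exists x. lra.
  - intros x. exact (hcoord_hpow 1 x).
Qed.

Section Renormalization.

Variables (g ginv : R -> R) (n : nat) (lambda Delta : R).
Hypothesis g_ginv : forall y, g (ginv y) = y.
Hypothesis n_ge_2 : (2 <= n)%nat.
Hypothesis g_h : forall x, g (h x) = hpow (Z.of_nat n) (g x).
Hypothesis lambda_gt_1 : 1 < lambda.
Hypothesis g_expanding : forall x y, x < y -> lambda * (y - x) <= g y - g x.
Hypothesis h_bounded : forall x, h x < x + Delta.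

Lemma INR_n_ge_2 : 2 <= INR n.
Proof. apply (le_INR 2), n_ge_2. Qed.

Lemma g_increasing x y : x < y -> g x < g y.
Proof. intros Hxy. pose proof (g_expanding x y Hxy). nra. Qed.

Lemma g_le x y : x <= y -> g x <= g y.
Proof. intros [Hlt|<-]; [left; apply g_increasing, Hlt | right; reflexivity]. Qed.

Lemma iter_g_le k x y : x <= y -> Nat.iter k g x <= Nat.iter k g y.
Proof. intros Hxy. induction k as [|k IH]; [exact Hxy | apply g_le, IH]. Qed.

Lemma iter_g_ginv k y : Nat.iter k g (Nat.iter k ginv y) = y.
Proof.
  induction k as [|k IH]; [reflexivity |].
  rewrite Nat.iter_succ_r. simpl (Nat.iter (S k) ginv y). rewrite g_ginv. exact IH.
Qed.

Lemma iter_g_expanding k x y :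
  x < y -> lambda ^ k * (y - x) <= Nat.iter k g y - Nat.iter k g x.
Proof.
  intros Hxy. induction k as [|k IH]; [simpl; lra |].
  assert (0 < lambda ^ k * (y - x)) by (apply Rmult_lt_0_compat; [apply pow_lt |]; lra).
  pose proof (g_expanding (Nat.iter k g x) (Nat.iter k g y) ltac:(lra)).
  simpl. nra.
Qed.

Lemma g_hpow j x : g (hpow j x) = hpow (Z.of_nat n * j) (g x).
Proof.
  induction j as [|j IH|j IH] using Z.peano_ind; [rewrite Z.mul_0_r; reflexivity | |].
  - rewrite <- Z.add_1_r, hpow_succ, g_h, IH, <- hpow_add. f_equal. ring.
  - rewrite <- Z.sub_1_r.
    assert (Hw : hpow j x = h (hpow (j - 1) x)) by (rewrite <- hpow_succ, Z.sub_add; reflexivity).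
    rewrite Hw, g_h in IH.
    transitivity (hpow (- Z.of_nat n + Z.of_nat n) (g (hpow (j - 1) x)));
      [rewrite Z.add_opp_diag_l; reflexivity |].
    rewrite hpow_add, IH, <- hpow_add. f_equal. ring.
Qed.

Lemma iter_g_h k x : Nat.iter k g (h x) = hpow (Z.of_nat (n ^ k)) (Nat.iter k g x).
Proof.
  induction k as [|k IH]; [reflexivity |].
  simpl Nat.iter. rewrite IH, g_hpow, Nat.pow_succ_r', Nat2Z.inj_mul. reflexivity.
Qed.

Lemma hindex_g y :
  (Z.abs (hindex (g y) - Z.of_nat n * hindex y) <= Z.abs (hindex (g 0)) + Z.of_nat n)%Z.
Proof.
  destruct (hindex_spec y) as [Hlo Hhi]. unfold horbit in Hlo, Hhi.
  apply g_le, hindex_le in Hlo. apply g_increasing, Rlt_le, hindex_le in Hhi.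
  rewrite g_hpow, hindex_hpow in Hlo, Hhi. lia.
Qed.

Definition renorm (x : R) (k : nat) : R := IZR (hindex (Nat.iter k g x)) / INR n ^ k.

Definition hindex_drift : R := IZR (Z.abs (hindex (g 0)) + Z.of_nat n).

Lemma renorm_step x k : Rabs (renorm x (S k) - renorm x k) <= hindex_drift * (/2) ^ S k.
Proof.
  pose proof INR_n_ge_2 as Hn.
  assert (Hpow : 0 < INR n ^ S k) by (apply pow_lt; lra).
  set (z := Nat.iter k g x).
  assert (E : renorm x (S k) - renorm x k =
              IZR (hindex (g z) - Z.of_nat n * hindex z) * / INR n ^ S k).
  { unfold renorm, z. simpl Nat.iter. rewrite minus_IZR, mult_IZR, <- INR_IZR_INZ.
    simpl pow. field. split; [apply pow_nonzero |]; lra. }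
  rewrite E, Rabs_mult, <- abs_IZR, Rabs_inv, Rabs_pos_eq by lra.
  apply Rmult_le_compat.
  - apply IZR_le. lia.
  - left. apply Rinv_0_lt_compat, Hpow.
  - apply IZR_le, hindex_g.
  - rewrite pow_inv. apply Rinv_le_contravar; [apply pow_lt; lra |].
    apply pow_incr. lra.
Qed.

Lemma renorm_Cauchy x : Cauchy_crit (renorm x).
Proof.
  apply (Cauchy_crit_geometric _ hindex_drift); [| apply renorm_step].
  apply IZR_le. lia.
Qed.

Definition phi (x : R) : R := proj1_sig (R_complete (renorm x) (renorm_Cauchy x)).

Lemma phi_cv x : Un_cv (renorm x) (phi x).
Proof. exact (proj2_sig (R_complete (renorm x) (renorm_Cauchy x))). Qed.

Lemma phi_h x : phi (h x) = phi x + 1.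
Proof.
  apply (UL_sequence (renorm (h x))); [apply phi_cv |].
  assert (E : renorm (h x) = fun k => renorm x k + 1).
  { apply functional_extensionality. intros k. pose proof INR_n_ge_2.
    unfold renorm. rewrite iter_g_h, hindex_hpow, plus_IZR, <- INR_IZR_INZ, pow_INR.
    field. apply pow_nonzero. lra. }
  rewrite E. apply CV_plus; [apply phi_cv | apply Un_cv_const].
Qed.

Lemma phi_g x : phi (g x) = INR n * phi x.
Proof.
  apply (UL_sequence (renorm (g x))); [apply phi_cv |].
  assert (E : renorm (g x) = fun k => INR n * renorm x (k + 1)).
  { apply functional_extensionality. intros k. pose proof INR_n_ge_2.
    unfold renorm. rewrite Nat.add_1_r, Nat.iter_succ_r. simpl pow.
    field. split; [apply pow_nonzero |]; lra. }
  rewrite E. apply (CV_mult (fun _ => INR n)); [apply Un_cv_const | apply CV_shift', phi_cv].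
Qed.

Lemma phi_le x y : x <= y -> phi x <= phi y.
Proof.
  intros Hxy. refine (Rle_cv_lim _ (phi_cv x) (phi_cv y)).
  intros k. unfold renorm, Rdiv. apply Rmult_le_compat_r.
  - left. apply Rinv_0_lt_compat, pow_lt. pose proof INR_n_ge_2. lra.
  - apply IZR_le, hindex_le, iter_g_le, Hxy.
Qed.

Lemma phi_hpow j x : phi (hpow j x) = phi x + IZR j.
Proof.
  induction j as [|j IH|j IH] using Z.peano_ind; [change (phi x = phi x + 0); ring | |].
  - rewrite <- Z.add_1_r, hpow_succ, phi_h, IH, plus_IZR. ring.
  - rewrite <- Z.sub_1_r, hpow_pred, minus_IZR.
    pose proof (phi_h (hinv (hpow j x))) as E. rewrite h_hinv, IH in E. lra.
Qed.

Lemma phi_iter_g k x : phi (Nat.iter k g x) = INR n ^ k * phi x.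
Proof.
  induction k as [|k IH]; [simpl; ring |].
  simpl Nat.iter. rewrite phi_g, IH. simpl. ring.
Qed.

Lemma phi_increasing x y : x < y -> phi x < phi y.
Proof.
  intros Hxy.
  destruct (Pow_x_infinity lambda ltac:(rewrite Rabs_pos_eq; lra) (Delta / (y - x))) as [k Hk].
  specialize (Hk k (le_n k)). rewrite Rabs_pos_eq in Hk by (apply pow_le; lra).
  pose proof (iter_g_expanding k x y Hxy) as Hexp.
  assert (Hspread : Delta <= Nat.iter k g y - Nat.iter k g x).
  { replace Delta with (Delta / (y - x) * (y - x)) by (field; lra). nra. }
  pose proof (h_bounded (Nat.iter k g x)).
  pose proof (phi_le (h (Nat.iter k g x)) (Nat.iter k g y) ltac:(lra)) as Hle.
  rewrite phi_h, !phi_iter_g in Hle.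
  assert (0 < INR n ^ k) by (apply pow_lt; pose proof INR_n_ge_2; lra).
  nra.
Qed.

Lemma phi_dense u v : u < v -> exists x, u < phi x < v.
Proof.
  intros Huv. pose proof INR_n_ge_2.
  destruct (Pow_x_infinity (INR n) ltac:(rewrite Rabs_pos_eq; lra) (2 / (v - u))) as [k Hk].
  specialize (Hk k (le_n k)).
  assert (Hpos : 0 < INR n ^ k) by (apply pow_lt; lra).
  rewrite Rabs_pos_eq in Hk by lra.
  destruct (exists_Z_between (phi 0) (INR n ^ k) u v Hpos) as [j Hj].
  { replace 1 with (2 / (v - u) * (v - u) / 2) by (field; lra). nra. }
  exists (Nat.iter k ginv (hpow j 0)).
  pose proof (phi_iter_g k (Nat.iter k ginv (hpow j 0))) as E.
  rewrite iter_g_ginv, phi_hpow in E.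
  replace (phi (Nat.iter k ginv (hpow j 0))) with ((phi 0 + IZR j) / INR n ^ k)
    by (rewrite E; field; lra).
  exact Hj.
Qed.

Lemma exists_affine_conjugacy :
  exists phi, homeo phi /\ (forall x, phi (g x) = INR n * phi x) /\
    (forall x, phi (h x) = phi x + 1).
Proof.
  exists phi. split; [| split; [exact phi_g | exact phi_h]].
  apply homeo_of_increasing_dense; [exact phi_increasing | exact phi_dense].
Qed.

End Renormalization.

End Orbits.

Theorem theorem5p8 (n : nat) (hn : (0 < n)%nat) :
  let g0 := fun x : R => INR n * x in
  let h0 := fun x : R => x + 1 in
  exists epsU epsV : R, 0 < epsU /\ 0 < epsV /\
    forall (g g' h h' : R -> R),
      C1_diffeo g -> C1_diffeo h ->
      (forall x, derivable_pt_lim g x (g' x)) ->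
      (forall x, derivable_pt_lim h x (h' x)) ->
      (forall x, Rabs (g x - g0 x) + Rabs (g' x - INR n) < epsU) ->
      (forall x, Rabs (h x - h0 x) + Rabs (h' x - 1) < epsV) ->
      extends_to_iso g0 h0 g h ->
      exists phi : R -> R, homeo phi /\
        (forall x, phi (g x) = g0 (phi x)) /\
        (forall x, phi (h x) = h0 (phi x)).
Proof.
  intros g0 h0. exists (1/2), (1/2). split; [lra | split; [lra |]].
  intros g g' h h' [_ [ginv [ginv_g [g_ginv _]]]] [_ [hinv [hinv_h [h_hinv _]]]]
    Dg Dh Cg Ch Iso.
  destruct (C1_close_bounds h h' h0 1 (1/2) Dh Ch) as [h_near h_slope].
  destruct (C1_close_bounds g g' g0 (INR n) (1/2) Dg Cg) as [_ g_slope].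
  unfold h0 in h_near |- *. unfold g0 in *.
  assert (h_increasing : forall x y, x < y -> h x < h y)
    by (intros x y Hxy; specialize (h_slope x y Hxy); lra).
  assert (h_displacement : forall x, x + /2 < h x) by (intros x; specialize (h_near x); lra).
  destruct n as [|[|m]]; [lia | |].
  - assert (g_id : g = fun x => x).
    { apply (extends_to_iso_id _ h0 g h Iso).
      - intros x y E. rewrite <- (ginv_g x), E. apply ginv_g.
      - intros x y E. rewrite <- (hinv_h x), E. apply hinv_h.
      - apply functional_extensionality. intros x. simpl. ring. }
    destruct (exists_translation_conjugacy h hinv (/2) hinv_h h_hinv h_increasing
                ltac:(lra) h_displacement) as [phi [Hphi phi_h]].
    exists phi. subst g. split; [exact Hphi | split; [intros x; simpl; ring | exact phi_h]].
  - assert (g_h : forall x, g (h x) = hpow h hinv (Z.of_nat (S (S m))) (g x)).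
    { intros x. rewrite hpow_of_nat. apply (extends_to_iso_relation _ h0 g h (S m) Iso).
      intros y. unfold h0. rewrite iter_translate. ring. }
    apply (exists_affine_conjugacy h hinv (/2) hinv_h h_hinv h_increasing ltac:(lra)
             h_displacement g ginv (S (S m)) (INR (S (S m)) - 1/2) (3/2) g_ginv
             ltac:(lia) g_h).
    + rewrite !S_INR. pose proof (pos_INR m). lra.
    + exact g_slope.
    + intros x. specialize (h_near x). lra.
Qed.
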